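(* Let $q$ be an odd prime power and $d\ge 2$. Let $V$ be a $(2d+1)$-dimensional vector space over $\mathbb{F}_q$ with basis $z,e_0,f_0,x,y,e_1,f_1,\dots,e_{d-2},f_{d-2}$ and nondegenerate symmetric bilinear form $\beta$ with $V=\langle z\rangle\perp\langle e_0,f_0\rangle\perp\langle x,y\rangle\perp\langle e_1,f_1\rangle\perp\cdots\perp\langle e_{d-2},f_{d-2}\rangle$, $\beta(z,z)=1$, $\beta(e_i,f_i)=1$, $\beta(e_i,e_i)=\beta(f_i,f_i)=0$, and $\langle x,y\rangle$ anisotropic; let $\kappa(v)=\beta(v,v)/2$ and let $\mathcal{Q}(2d,q)$ be the associated parabolic quadric. Let $W=\langle z,e_0,f_0\rangle$, $U=W^\perp$, $B=\{g\oplus 1_U: g\in\Omega(W)\}$ with $\Omega(W)$ the derived subgroup of the orthogonal group of $(W,\kappa|_W)$, and let $\tau$ be the linear map with $z\mapsto -z$ fixing all other basis vectors. Then for every point $P$ of $\mathcal{Q}(2d,q)$ there exists $g\in B$ with $P^g=P^\tau$.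
   Context: A point of $\mathcal{Q}(2d,q)$ is a $1$-dimensional subspace of $V$ on which $\kappa$ vanishes. *)

From HB Require Import structures.
From mathcomp Require Import all_boot all_order all_algebra all_fingroup all_field.
Unset Printing Implicit Defensive.
Import GRing.Theory.
Local Open Scope ring_scope.

(* Coordinates w.r.t. the ordered basis z, e0, f0 | x, y, e1, f1, ..., e_{d-2}, f_{d-2}.
   Vectors are row vectors, linear maps act on the right (v |-> v *m M). *)

Definition gramW (F : fieldType) : 'M[F]_3 :=
  \matrix_(i < 3, j < 3)
    (if (i == 0%N :> nat) && (j == 0%N :> nat) then 1
     else if ((i == 1%N :> nat) && (j == 2%N :> nat)) || ((i == 2%N :> nat) && (j == 1%N :> nat))
          then 1 else 0).

(* Gram matrix of beta on U = <x,y> _|_ <e1,f1> _|_ ... _|_ <e_{d-2},f_{d-2}>,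
   where beta(x,x)=a, beta(x,y)=b, beta(y,y)=c. *)
Definition gramU (F : fieldType) (d : nat) (a b c : F) : 'M[F]_(2 * (d - 1)) :=
  \matrix_(i < 2 * (d - 1), j < 2 * (d - 1))
    (if (i < 2)%N && (j < 2)%N then
       (if (i == 0%N :> nat) && (j == 0%N :> nat) then a
        else if (i == 1%N :> nat) && (j == 1%N :> nat) then c else b)
     else if (i./2 == j./2) && (i != j :> nat) then 1 else 0).

Definition gramV (F : fieldType) (d : nat) (a b c : F) : 'M[F]_(3 + 2 * (d - 1)) :=
  block_mx (gramW F) 0 0 (gramU F d a b c).

Definition anisotropic2 (F : fieldType) (a b c : F) : Prop :=
  forall s t : F, (s, t) != (0, 0) -> a * s ^+ 2 + 2 * b * s * t + c * t ^+ 2 != 0.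

Definition kappa (F : fieldType) (n : nat) (G : 'M[F]_n) (v : 'rV[F]_n) : F :=
  (v *m G *m v^T) 0 0 / 2.

(* points of the quadric: nonzero vectors (spanning 1-spaces) on which kappa vanishes *)
Definition is_point (F : fieldType) (d : nat) (a b c : F) (v : 'rV[F]_(3 + 2 * (d - 1))) : Prop :=
  v != 0 /\ kappa F (3 + 2 * (d - 1)) (gramV F d a b c) v = 0.

Definition OW (F : finFieldType) : {set {'GL_3[F]}} :=
  [set g : {'GL_3[F]} | [forall w : 'rV[F]_3,
     kappa F 3 (gramW F) (w *m GLval g) == kappa F 3 (gramW F) w]].

Definition OmegaW (F : finFieldType) : {set {'GL_3[F]}} := [~: OW F, OW F]%g.

Definition extU (F : finFieldType) (d : nat) (g : {'GL_3[F]}) : 'M[F]_(3 + 2 * (d - 1)) :=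
  block_mx (GLval g) 0 0 1%:M.

Definition tau (F : fieldType) (d : nat) : 'M[F]_(3 + 2 * (d - 1)) :=
  \matrix_(i, j) (if i == j then (if (i == 0%N :> nat) then -1 else 1) else 0).

From HB Require Import structures.
From mathcomp Require Import all_boot all_order all_algebra all_fingroup all_field.
From mathcomp Require Import ring.

(* Write r_a for the reflection in an anisotropic vector a of W; tau acts on W
   as r_z and trivially on U.  Given w in W, choose b in W with
   beta(b, b) = beta(z, z), b orthogonal to w r_z, and c = z + b anisotropic.
   Then r_c swaps z and -b, so r_c r_z r_c = r_b and the commutator [r_z, r_c]
   acts as r_z r_b; since r_b fixes w r_z, the commutator, an element of
   Omega(W), maps w to w^tau. *)

Set Implicit Arguments.
Unset Strict Implicit.
Unset Printing Implicit Defensive.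

Import GRing.Theory.
Local Open Scope ring_scope.

Section Reflections.
Variables (F : fieldType) (n : nat) (G : 'M[F]_n).
Hypothesis symG : G^T = G.

Definition bilin (x y : 'rV[F]_n) : F := (x *m G *m y^T) 0 0.

Lemma kappaE v : kappa F n G v = bilin v v / 2.
Proof. by []. Qed.

Lemma bilinC x y : bilin x y = bilin y x.
Proof.
by rewrite /bilin -[x *m G *m y^T]trmxK [LHS]mxE !trmx_mul trmxK symG mulmxA.
Qed.

Lemma bilinDl x y z : bilin (x + y) z = bilin x z + bilin y z.
Proof. by rewrite /bilin !mulmxDl !mxE. Qed.

Lemma bilinDr x y z : bilin z (x + y) = bilin z x + bilin z y.
Proof. by rewrite /bilin raddfD /= mulmxDr mxE. Qed.

Lemma bilinNr x y : bilin x (- y) = - bilin x y.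
Proof. by rewrite /bilin linearN /= mulmxN mxE. Qed.

Lemma bilinBZl x y a s : bilin (x - s *: a) y = bilin x y - s * bilin a y.
Proof. by rewrite /bilin !mulmxBl -!scalemxAl !mxE. Qed.

Lemma bilinBZr x y a s : bilin y (x - s *: a) = bilin y x - s * bilin y a.
Proof. by rewrite bilinC bilinBZl !(bilinC y). Qed.

Definition refl (a : 'rV[F]_n) : 'M[F]_n :=
  1%:M - (2 / bilin a a) *: (G *m a^T *m a).

Lemma mul_refl v a : v *m refl a = v - (2 * bilin v a / bilin a a) *: a.
Proof.
rewrite /refl mulmxBr mulmx1 -scalemxAr !mulmxA.
by rewrite [v *m _ *m _]mx11_scalar mul_scalar_mx scalerA mulrAC mulrC mulrA.
Qed.

Lemma refl_fix v a : bilin v a = 0 -> v *m refl a = v.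
Proof. by move=> va0; rewrite mul_refl va0 mulr0 mul0r scale0r subr0. Qed.

Lemma reflK a (v : 'rV[F]_n) : bilin a a != 0 -> v *m refl a *m refl a = v.
Proof.
by move=> aa0; rewrite !mul_refl bilinBZl; apply/rowP => j; rewrite !mxE; field.
Qed.

Lemma bilin_refl a x y : bilin a a != 0 ->
  bilin (x *m refl a) (y *m refl a) = bilin x y.
Proof.
by move=> aa0; rewrite !mul_refl bilinBZl !bilinBZr (bilinC a y); field.
Qed.

Lemma mulmx_reflK a : bilin a a != 0 -> refl a *m refl a = 1%:M.
Proof.
by move=> aa0; apply/row_matrixP => i; rewrite !rowE mulmxA reflK ?mulmx1.
Qed.

Lemma refl_unit a : bilin a a != 0 -> refl a \in unitmx.
Proof. by move=> aa0; case: (mulmx1_unit (mulmx_reflK aa0)). Qed.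

Lemma invmx_refl a : bilin a a != 0 -> invmx (refl a) = refl a.
Proof.
move=> aa0.
by rewrite -[invmx _]mulmx1 -(mulmx_reflK aa0) mulmxA mulVmx ?mul1mx ?refl_unit.
Qed.

Lemma refl_conj a c (v : 'rV[F]_n) : bilin a a != 0 -> bilin c c != 0 ->
  v *m refl c *m refl a *m refl c = v *m refl (a *m refl c).
Proof.
move=> aa0 cc0.
have vcaE : bilin (v *m refl c) a = bilin v (a *m refl c).
  by rewrite -(bilin_refl _ a cc0) reflK.
rewrite [v *m refl c *m refl a]mul_refl mulmxBl -scalemxAl reflK //.
by rewrite [RHS]mul_refl bilin_refl // vcaE.
Qed.

Lemma refl_swap z b : bilin z z = bilin b b -> bilin (z + b) (z + b) != 0 ->
  z *m refl (z + b) = - b.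
Proof.
move=> zzbb zb0; rewrite mul_refl.
have -> : 2 * bilin z (z + b) = bilin (z + b) (z + b).
  by rewrite !bilinDl !bilinDr zzbb (bilinC b z); ring.
by rewrite divff // scale1r opprD addNKr.
Qed.
End Reflections.

Section ReflectionGroup.
Variables (F : finFieldType) (n : nat) (G : 'M[F]_n.+1).
Hypothesis symG : G^T = G.

Definition reflGL a (aa0 : bilin G a a != 0) : {'GL_n.+1[F]} :=
  Sub (refl G a) (refl_unit aa0).

Lemma mul_commg_reflGL a c (aa0 : bilin G a a != 0) (cc0 : bilin G c c != 0)
    (v : 'rV[F]_n.+1) :
  v *m GLval [~ reflGL aa0, reflGL cc0]%g = v *m refl G a *m refl G (a *m refl G c).
Proof.
by rewrite /commg /conjg !GL_MxE !GL_VxE /= !invmx_refl // !mulmxA refl_conj.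
Qed.
End ReflectionGroup.

Lemma delta00_block (F : fieldType) m k (c : F) :
  1%:M - c *: delta_mx (lshift k 0) (lshift k 0) =
  block_mx (1%:M - c *: delta_mx 0 0) 0 0 1%:M :> 'M_(m.+1 + k).
Proof.
have -> : delta_mx (lshift k 0) (lshift k 0) =
          block_mx (delta_mx 0 0) 0 0 0 :> 'M[F]_(m.+1 + k).
  by rewrite delta_mx_ushift delta_mx_lshift block_mxEv row_mx0.
rewrite (scalar_mx_block m.+1 k) scale_block_mx opp_block_mx add_block_mx.
by rewrite !scaler0 !oppr0 !addr0.
Qed.

Section SpaceW.
Variable F : fieldType.

Lemma gramW_sym : (gramW F)^T = gramW F.
Proof. by apply/matrixP => -[[|[|[|i]]] hi] [[|[|[|j]]] hj]; rewrite !mxE. Qed.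

Lemma bilinW x y :
  bilin (gramW F) x y = x 0 0 * y 0 0 + x 0 1 * y 0 2 + x 0 2 * y 0 1.
Proof.
rewrite /bilin !mxE !big_ord_recl big_ord0 /= !mxE !big_ord_recl !big_ord0 /= !mxE /=.
have -> : lift ord0 ord0 = 1 :> 'I_3 by apply: val_inj.
have -> : lift ord0 (lift ord0 ord0) = 2 :> 'I_3 by apply: val_inj.
ring.
Qed.

Definition zW : 'rV[F]_3 := delta_mx 0 0.

Lemma bilin_zW x : bilin (gramW F) x zW = x 0 0.
Proof. by rewrite bilinW !mxE /=; ring. Qed.

Lemma refl_zW : refl (gramW F) zW = 1%:M - 2 *: delta_mx 0 0.
Proof.
have gramW_zW : gramW F *m zW^T = zW^T.
  rewrite -[gramW F]gramW_sym -trmx_mul -rowE.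
  by congr (_^T); apply/rowP => -[[|[|[|j]]] hj]; rewrite !mxE.
by rewrite /refl bilin_zW mxE /= divr1 gramW_zW trmx_delta mul_delta_mx.
Qed.

Lemma exists_orthogonal_unit (u : 'rV[F]_3) : (2 : F) != 0 ->
  exists b, [/\ bilin (gramW F) b b = 1, bilin (gramW F) u b = 0 & 1 + b 0 0 != 0].
Proof.
move=> two0.
have [u1_0|u1_neq0] := eqVneq (u 0 1) 0; first have [u2_0|u2_neq0] := eqVneq (u 0 2) 0.
- exists (\row_j [:: 0; 1; 2^-1]`_j); rewrite !bilinW !mxE /= u1_0 u2_0.
  by split; [field | ring | rewrite addr0 oner_neq0].
- exists (\row_j [:: 1; - (u 0 0 / u 0 2); 0]`_j); rewrite !bilinW !mxE /= u1_0.
  by split; [ring | field | ].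
- exists (\row_j [:: 1; 0; - (u 0 0 / u 0 1)]`_j); rewrite !bilinW !mxE /=.
  by split; [ring | field | ].
Qed.

Lemma tau_delta d : tau F d = 1%:M - 2 *: delta_mx (lshift _ 0) (lshift _ 0).
Proof.
apply/matrixP => i j; rewrite !mxE; case: eqVneq => [<-|ij].
  by case: i => -[|i] hi /=; ring.
have -> : (i == lshift _ 0) && (j == lshift _ 0) = false.
  by apply: contraNF ij => /andP[/eqP-> /eqP->].
by rewrite mulr0 subr0.
Qed.

Lemma tau_block d : tau F d = block_mx (refl (gramW F) zW) 0 0 1%:M.
Proof. by rewrite tau_delta delta00_block refl_zW. Qed.
End SpaceW.

Section OmegaW.
Variable F : finFieldType.

Lemma reflGL_OW a (aa0 : bilin (gramW F) a a != 0) : reflGL aa0 \in OW F.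
Proof.
by rewrite inE; apply/forallP => x; rewrite !kappaE bilin_refl ?gramW_sym.
Qed.

Lemma OmegaW_refl_zW (w : 'rV[F]_3) : (2 : F) != 0 ->
  exists2 g, g \in OmegaW F & w *m GLval g = w *m refl (gramW F) (zW F).
Proof.
move=> two0.
have zz1 : bilin (gramW F) (zW F) (zW F) = 1 by rewrite bilin_zW mxE.
have zz0 : bilin (gramW F) (zW F) (zW F) != 0 by rewrite zz1 oner_neq0.
have [b [bb1 ub0 b0]] := exists_orthogonal_unit (w *m refl (gramW F) (zW F)) two0.
have cc0 : bilin (gramW F) (zW F + b) (zW F + b) != 0.
  have -> : bilin (gramW F) (zW F + b) (zW F + b) = 2 * (1 + b 0 0).
    by rewrite !bilinDl !bilinDr zz1 bb1 (bilinC (gramW_sym F) (zW F)) bilin_zW; ring.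
  exact: mulf_neq0.
exists [~ reflGL zz0, reflGL cc0]%g; first by rewrite mem_commg ?reflGL_OW.
have zzbb : bilin (gramW F) (zW F) (zW F) = bilin (gramW F) b b by rewrite zz1 bb1.
rewrite (mul_commg_reflGL (gramW_sym F)) (refl_swap (gramW_sym F) zzbb cc0).
by rewrite refl_fix // bilinNr ub0 oppr0.
Qed.
End OmegaW.

Theorem lemma3p5 (F : finFieldType) (hF : (2 : F) != 0) (d : nat) (hd : (2 <= d)%N)
  (a b c : F) (haniso : anisotropic2 F a b c)
  (v : 'rV[F]_(3 + 2 * (d - 1))) (hv : is_point F d a b c v) :
  exists g : {'GL_3[F]}, g \in OmegaW F /\
    exists lam : F, lam != 0 /\ v *m extU F d g = lam *: (v *m tau F d).
Proof.
have [g gOmega gE] := OmegaW_refl_zW (lsubmx v) hF.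
exists g; split => //; exists 1; split; first exact: oner_neq0.
by rewrite scale1r tau_block /extU -(hsubmxK v) !mul_row_block gE.
Qed.
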